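(* Let $D_1$ and $D_2$ be two different subsets of $MB_Y$, each of which is a set of fair causal features (i.e. a feasible solution of the fair causal feature selection problem described in the context). Then $D_1 \cup D_2$ is again a causally fair solution, i.e. the predictor $Y'$ obtained by training a classifier on $D_1 \cup D_2$ is causally fair with respect to the sensitive variable $S$.
   Context: Setting: a dataset over a finite set of random variables $V = \{S\} \cup X \cup \{Y\}$, where $S$ is the sensitive variable, $X = \{X_1,\dots,X_n\}$ the non-sensitive features and $Y$ the class (label) variable. The joint distribution $P(V)$ together with a directed acyclic graph $G$ on $V$ forms a Bayesian network (each variable is independent of its non-descendants given its parents) that is faithful (a conditional independence holds in $P$ iff the corresponding d-separation holds in $G$). The Markov blanket $MB_W$ of a variable $W$ is the set of its parents, children, and the other parents of its children in $G$; $MB_Y \subseteq X$ and $MB_S$ denote the Markov blankets of $Y$ and $S$. Intervention $do(W=w)$ means setting $W$ to $w$ in the modified graph obtained from $G$ by deleting all edges into $W$. Classifier training on a feature set $T \subseteq V$ produces a new variable $Y'$ added to the causal graph as a child of all features in $T$, generated by the mechanism $P(Y' \mid T)$ derived from the observational distribution $P$. Causal (interventional) fairness: for a set $K \subseteq V \setminus \{S, Y'\}$, the predictor is $K$-fair if for every value $k$ of $K$ and every outcome $o$, $\Pr(Y'=o \mid do(S=0), do(K=k)) = \Pr(Y'=o \mid do(S=1), do(K=k))$; it is causally fair if it is $K$-fair for every such $K$ (graphically, $S$ is d-separated from $Y'$ given $K$ in the graph where the edges from $S$ into $K$ are removed). A set $T$ is a set of fair causal features if the predictor $Y'$ trained on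 $T$ is causally fair and $T \subseteq MB_Y$ (so its features have an explainable causal relation with $Y$). The fair causal feature selection problem asks for the largest subset $T \subseteq MB_Y$ that is a set of fair causal features. *)

From mathcomp Require Import all_boot.
Set Implicit Arguments. Unset Strict Implicit. Unset Printing Implicit Defensive.

Section Graphs.
Variable U : finType.

(* A directed graph on U: [e x y] means there is an edge x -> y. *)
Definition acyclic (e : rel U) : Prop := forall x y, e x y -> ~~ connect e y x.

Definition descendant (e : rel U) (x y : U) : bool := connect e x y.

Definition adjacent (e : rel U) (a b : U) : bool := e a b || e b a.

Definition active_at (e : rel U) (Z : {set U}) (a v b : U) : bool :=
  if e a v && e b v
  then [exists z in Z, descendant e v z]   (* collider: v or a descendant in Z *)
  else v \notin Z.                         (* non-collider: v not in Z *)

Fixpoint active_interior (e : rel U) (Z : {set U}) (a : U) (s : seq U) : bool :=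
  match s with
  | v :: ((b :: _) as s') => active_at e Z a v b && active_interior e Z v s'
  | _ => true
  end.

Definition d_connecting (e : rel U) (Z : {set U}) (x : U) (p : seq U) : bool :=
  [&& path (adjacent e) x p, uniq (x :: p) & active_interior e Z x p].

Definition d_separated (e : rel U) (x y : U) (Z : {set U}) : Prop :=
  forall p : seq U, last x p = y -> ~~ d_connecting e Z x p.
End Graphs.

Section Causal.
Variable V : finType.

Definition markov_blanket (G : rel V) (W : V) : {set V} :=
  [set x | (x != W) && [|| G x W, G W x | [exists c, G W c && G x c]]].

(* The causal graph extended with the predictor Y' (= None) as a child of
   every feature in T. Vertices: Some v for v in V, and None for Y'. *)
Definition with_predictor (G : rel V) (T : {set V}) : rel (option V) :=
  fun a b => match a, b with
             | Some x, Some y => G x y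
             | Some x, None => x \in T
             | _, _ => false
             end.

Definition cut_S_into_K (e : rel (option V)) (S : V) (K : {set V}) : rel (option V) :=
  fun a b => e a b && ~~ ((a == Some S) && [exists k in K, b == Some k]).

(* K-fairness (graphical criterion of the paper): S is d-separated from Y'
   given K in the extended graph with the edges from S into K removed. *)
Definition K_fair (G : rel V) (S : V) (T : {set V}) (K : {set V}) : Prop :=
  d_separated (cut_S_into_K (with_predictor G T) S K) (Some S) None
              [set Some k | k in K].

Definition causally_fair (G : rel V) (S : V) (T : {set V}) : Prop :=
  forall K : {set V}, S \notin K -> K_fair G S T K.

Definition fair_causal_features (G : rel V) (S Y : V) (T : {set V}) : Prop :=
  T \subset markov_blanket G Y /\ causally_fair G S T.
End Causal.

From mathcomp Require Import all_boot.

(* Every edge of the extended graph that enters a vertex other than the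
   predictor Y' is an edge of G (possibly cut), whatever the feature set T,
   and Y' has no outgoing edges.  A simple d-connecting path from S to Y'
   meets Y' only at its end, so everything but its last edge w -> Y' is seen
   identically in the graph of any other feature set, with the same colliders
   and the same descendants.  As w lies in D1 or D2, the path is d-connecting
   for that set as well, contradicting its fairness. *)

Section AgreeOffSink.
Variables (U : finType) (t : U) (e1 e2 : rel U).
Hypothesis agree_off_t : forall a b, b != t -> e1 a b = e2 a b.
Hypothesis sink1 : forall b, ~~ e1 t b.
Hypothesis sink2 : forall b, ~~ e2 t b.

Lemma path_sink_agree x p : last x p != t -> path e1 x p = path e2 x p.
Proof.
elim: p x => [|y p IH] x //=.
have [->|y_nt] := eqVneq y t => last_nt; last by rewrite agree_off_t // IH.
case: p IH last_nt => [|z p] _ /=; first by rewrite eqxx.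
by rewrite (negbTE (sink1 z)) (negbTE (sink2 z)) !andbF.
Qed.

Lemma connect_sink_agree x z : z != t -> connect e1 x z = connect e2 x z.
Proof.
move=> z_nt; apply/connectP/connectP => -[p p_path last_z]; exists p => //.
  by rewrite -path_sink_agree -?last_z.
by rewrite path_sink_agree -?last_z.
Qed.

Lemma active_at_sink_agree (Z : {set U}) a v b :
  t \notin Z -> v != t -> active_at e1 Z a v b = active_at e2 Z a v b.
Proof.
move=> tZ v_nt; rewrite /active_at !agree_off_t //.
case: ifP => // _; apply: eq_existsb => z; apply: andb_id2l => zZ.
by rewrite /descendant connect_sink_agree //; apply: contraNneq tZ => <-.
Qed.

Lemma active_interior_sink_agree (Z : {set U}) a s :
  t \notin Z -> t \notin belast a s ->
  active_interior e1 Z a s = active_interior e2 Z a s.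
Proof.
move=> tZ; elim: s a => [|v [|b s] IH] a //.
rewrite [belast _ _]/= !inE => /norP[_ /norP[t_nv t_rest]].
change (active_at e1 Z a v b && active_interior e1 Z v (b :: s) =
        active_at e2 Z a v b && active_interior e2 Z v (b :: s)).
by rewrite active_at_sink_agree 1?eq_sym // IH //= inE negb_or t_nv.
Qed.

Lemma d_connecting_sink_agree (Z : {set U}) x q :
  t \notin Z -> adjacent e2 (last x q) t ->
  d_connecting e1 Z x (rcons q t) -> d_connecting e2 Z x (rcons q t).
Proof.
move=> tZ last_adj /and3P[]; rewrite rcons_path => /andP[q_path _] uniq_xq.
have := uniq_xq; rewrite -rcons_cons rcons_uniq => /andP[t_xq _].
rewrite /d_connecting rcons_path uniq_xq last_adj andbT.
rewrite -active_interior_sink_agree ?belast_rcons // => -> /=; rewrite andbT.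
have avoid_t : all (fun v => v != t) (x :: q).
  by apply/allP => v vq; apply: contraNneq t_xq => <-.
rewrite -(eq_in_path (e := adjacent e1) _ avoid_t) // => a b a_nt b_nt.
by rewrite /adjacent !agree_off_t.
Qed.

End AgreeOffSink.

Section PredictorGraph.
Variables (V : finType) (G : rel V) (S : V) (K : {set V}).

Let cut_graph (T : {set V}) := cut_S_into_K (with_predictor G T) S K.

Lemma cut_graph_into_Some (T T' : {set V}) a y :
  cut_graph T a (Some y) = cut_graph T' a (Some y).
Proof. by case: a. Qed.

Lemma adjacent_cut_graph_None (T : {set V}) a :
  adjacent (cut_graph T) a None = if a is Some w then w \in T else false.
Proof.
case: a => [w|] //; rewrite /adjacent /cut_graph /cut_S_into_K /= orbF.
by case: (w \in T) => //=; apply/negP => /andP[_ /existsP[k /andP[_ //]]].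
Qed.

Lemma d_connecting_cut_graph_transfer {T T' : {set V}} {Z : {set option V}} {x q w} :
  None \notin Z -> last x q = Some w -> w \in T' ->
  d_connecting (cut_graph T) Z x (rcons q None) ->
  d_connecting (cut_graph T') Z x (rcons q None).
Proof.
move=> NZ last_w wT'; apply: d_connecting_sink_agree => //.
- by move=> a [y|] //; rewrite cut_graph_into_Some.
- by rewrite last_w adjacent_cut_graph_None.
Qed.

Lemma K_fair_setU (T1 T2 : {set V}) :
  K_fair G S T1 K -> K_fair G S T2 K -> K_fair G S (T1 :|: T2) K.
Proof.
move=> fair1 fair2 p; case/lastP: p => [|q y] //; rewrite last_rcons => ->{y}.
apply/negP => dconn.
have NZ : None \notin [set Some k | k in K] by apply/imsetP => -[].
have := dconn; case/and3P; rewrite rcons_path => /andP[_].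
rewrite adjacent_cut_graph_None; case last_w: (last _ q) => [w|] // wT _ _.
have fair_contra (T : {set V}) : w \in T -> K_fair G S T K -> False.
  move=> wT' fairT; apply: (negP (fairT _ (last_rcons _ _ _))).
  exact: d_connecting_cut_graph_transfer NZ last_w wT' dconn.
by case/setUP: wT => wT; [exact: fair_contra fair1 | exact: fair_contra fair2].
Qed.

End PredictorGraph.

Theorem lemma1 (V : finType) (G : rel V) (S Y : V)
  (hSY : S != Y) (hG : acyclic G) (hMB : S \notin markov_blanket G Y)
  (D1 D2 : {set V}) (hD : D1 != D2)
  (h1 : fair_causal_features G S Y D1) (h2 : fair_causal_features G S Y D2) :
  fair_causal_features G S Y (D1 :|: D2).
Proof.
case: h1 h2 => [D1_MB fair1] [D2_MB fair2]; split.
  by rewrite subUset D1_MB D2_MB.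
by move=> K SK; apply: K_fair_setU; [exact: fair1 | exact: fair2].
Qed.
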